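(* Let $d\in T^{W_P}$, $q=\alpha_1(d)$, and $z\in Z_d$ with $z=u_1\dot w_Pd\bar u_2$, $u_1\in U_+\cap\dot w_PU_+\dot w_P^{-1}$, $\bar u_2\in U_-$, where $\bar u_2=y_1(a_1)\cdots y_{m-1}(a_{m-1})y_m(c)y_{m-1}(b_{m-1})\cdots y_1(b_1)$ with all $a_i,c,b_i\neq0$. Then $$\mathcal F_d(\pi_R(z))=a_1+\dots+a_{m-1}+c+b_{m-1}+\dots+b_1+q\,\frac{a_1+b_1}{a_1\cdots a_{m-1}\,c\,b_{m-1}\cdots b_1}.$$
   Context: Fix an integer $m\ge 2$. Let $V=\mathbb C^{2m}$ and let $J$ be the $2m\times 2m$ matrix with $J_{i,2m+1-i}=(-1)^i$ for $1\le i\le 2m$ and all other entries $0$. Let $G=\mathrm{PSp}(V,J)\cong\mathrm{PSp}_{2m}(\mathbb C)$, whose elements are represented by matrices. Let $E_{i,j}$ denote matrix units, $e_i=E_{i,i+1}+E_{2m-i,2m-i+1}$ for $1\le i\le m-1$, $e_m=E_{m,m+1}$, $f_i=e_i^{T}$, $x_i(a)=\exp(ae_i)$, $y_i(a)=\exp(af_i)$. Let $B_+=TU_+$ and $B_-=TU_-$ be the upper resp. lower triangular elements of $G$, with $U_\pm$ their unipotent radicals and $T$ the diagonal elements $(d_{ij})$ with $d_{ii}=d_{2m+1-i,2m+1-i}^{-1}$. The Weyl group $W$ is generated by $s_1,\dots,s_m$ with representatives $\dot s_i=y_i(-1)x_i(1)y_i(-1)$; for $w=s_{i_1}\cdots s_{i_k}$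 reduced, $\dot w=\dot s_{i_1}\cdots\dot s_{i_k}$. Let $W_P=\langle s_2,\dots,s_m\rangle$, $w_P$ its longest element, $w_0$ the longest element of $W$. Let $T^{W_P}$ be the $W_P$-fixed part of $T$, and $\alpha_1(d)=d_{11}/d_{22}$. For $d\in T^{W_P}$ let $Z_d=B_-\dot w_0\cap U_+d\dot w_PU_-$. The open Richardson variety is $\mathcal R=(B_+\dot w_PB_-\cap B_-\dot w_0B_-)/B_-\subset G/B_-$, and $\pi_R:Z_d\to\mathcal R$, $z\mapsto zB_-$, is an isomorphism. Each $z\in Z_d$ is written uniquely as $z=u_1\dot w_Pd\bar u_2$ with $u_1\in U_+\cap\dot w_PU_+\dot w_P^{-1}$ and $\bar u_2\in U_-$. For $u\in U_+$ put $e_i^*(u)=u_{i,i+1}$, and for $\bar u\in U_-$ put $f_i^*(\bar u)=\bar u_{i+1,i}$. The superpotential is $\mathcal F_d(\pi_R(z))=\sum_{i=1}^m e_i^*(u_1)+\sum_{i=1}^m f_i^*(\bar u_2)$. *)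

(* Matrices in Sp_{2m} over a numeric closed field F
   (the MathComp stand-in for C).  Indices are 1-based via [ent1]. *)
From HB Require Import structures.
From mathcomp Require Import all_boot all_order all_algebra.
Set Implicit Arguments. Unset Strict Implicit. Unset Printing Implicit Defensive.
Import Order.TTheory GRing.Theory Num.Theory.
Local Open Scope ring_scope.

Section PSp.
Variables (F : fieldType) (m : nat).
Notation n := (m.*2).
Notation M := 'M[F]_n.

(* entry (i,j) of a matrix, 0-based nat indices, 0 outside the range *)
Definition ent (A : M) (i j : nat) : F :=
  match @insub _ (fun k => k < n)%N _ i, @insub _ (fun k => k < n)%N _ j with
  | Some i', Some j' => A i' j'
  | _, _ => 0
  end.
Definition ent1 (A : M) (i j : nat) : F := ent A i.-1 j.-1.

Definition Emx (i j : nat) : M :=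
  \matrix_(r, s) (((r.+1 == i) && (s.+1 == j))%N)%:R.

Definition Jmx : M :=
  \matrix_(r, s) (if (r.+1 + s.+1 == n.+1)%N then (-1) ^+ r.+1 else 0).

Definition e_gen (i : nat) : M :=
  if (i < m)%N then Emx i i.+1 + Emx (n - i) (n - i).+1 else Emx m m.+1.
Definition f_gen (i : nat) : M := (e_gen i)^T.

(* matrix powers and the exponential; the exponential series of a matrix N
   with N^(2m) = 0 (nilpotent of size 2m) is the finite sum below *)
Definition mxpow (k : nat) (N : M) : M := iter k (mulmx N) 1%:M.
Definition mexp (N : M) : M := \sum_(k < n) (k`!%:R)^-1 *: mxpow k N.

Definition x_gen (i : nat) (a : F) : M := mexp (a *: e_gen i).
Definition y_gen (i : nat) (a : F) : M := mexp (a *: f_gen i).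

Definition sdot (i : nat) : M := y_gen i (-1) *m x_gen i 1 *m y_gen i (-1).
(* representative of a Weyl group element given by a (reduced) word *)
Definition wdot (w : seq nat) : M := foldr (fun i A => sdot i *m A) 1%:M w.

(* reduced word (s_1 ... s_m)^m for the longest element w_0 of W (type C_m) *)
Definition w0_word : seq nat := flatten (nseq m (iota 1 m)).
(* reduced word (s_2 ... s_m)^(m-1) for the longest element w_P of
   W_P = <s_2,...,s_m> (type C_{m-1}) *)
Definition wP_word : seq nat := flatten (nseq m.-1 (iota 2 m.-1)).
Definition w0dot : M := wdot w0_word.
Definition wPdot : M := wdot wP_word.

Definition in_Sp (A : M) : bool := A^T *m Jmx *m A == Jmx.
Definition upper_tri (A : M) : bool := [forall i : 'I_n, forall j : 'I_n, (j < i)%N ==> (A i j == 0)].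
Definition lower_tri (A : M) : bool := [forall i : 'I_n, forall j : 'I_n, (i < j)%N ==> (A i j == 0)].
Definition unitri_diag (A : M) : bool := [forall i : 'I_n, A i i == 1].
Definition in_Uplus (A : M) : bool := [&& in_Sp A, upper_tri A & unitri_diag A].
Definition in_Uminus (A : M) : bool := [&& in_Sp A, lower_tri A & unitri_diag A].
Definition in_T (d : M) : bool :=
  [forall i : 'I_n, forall j : 'I_n, (i != j) ==> (d i j == 0)] &&
  [forall i : 'I_n, d i i * ent d (n - i.+1) (n - i.+1) == 1].
(* W_P-fixed part of T: d is fixed (in PSp, i.e. up to the sign -1) under
   the action of the generators s_2,...,s_m of W_P *)
Definition in_TWP (d : M) : bool :=
  in_T d && all (fun i => (sdot i *m d == d *m sdot i)
                          || (sdot i *m d == - (d *m sdot i))) (iota 2 m.-1).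
Definition alpha1 (d : M) : F := ent1 d 1 1 / ent1 d 2 2.

Definition ubar2_of (a : nat -> F) (c : F) (b : nat -> F) : M :=
  foldr (fun i A => y_gen i (a i) *m A)
    (y_gen m c *m foldr (fun i A => y_gen i (b i) *m A) 1%:M (rev (iota 1 m.-1)))
    (iota 1 m.-1).

(* superpotential F_d(pi_R(z)) for z = u1 wP d ubar2 *)
Definition superpot (u1 ubar2 : M) : F :=
  \sum_(1 <= i < m.+1) ent1 u1 i i.+1 + \sum_(1 <= i < m.+1) ent1 ubar2 i.+1 i.

End PSp.

From HB Require Import structures.
From mathcomp Require Import all_boot all_order all_algebra zify ring.
Set Implicit Arguments. Unset Strict Implicit. Unset Printing Implicit Defensive.
Import Order.TTheory GRing.Theory Num.Theory.
Local Open Scope ring_scope.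

(* The superpotential on the open Richardson variety of PSp_{2m} (n = 2m) in
   the coordinates u1 wP d ubar2, computed on the standard basis e_1..e_n.
   1. f_i^2 = e_i^2 = 0, so y_i(t) = 1 + t f_i and each s_i-dot is a signed
      transposition of the basis; powers of Coxeter words show that w_P-dot
      fixes e_1, e_n and reverses 2..n-1, while w_0-dot reverses 1..n.
   2. A product of factors y_i(t) is lower unitriangular with subdiagonal the
      sum of the steps; for ubar2 this gives sum(a) + c + sum(b), and the last
      row of ubar2^-1 is -(a_1+b_1) at column n-1 and -prod at column 1.
   3. wP^-1 u1 wP upper triangular forces u1_(i,i+1) = 0 for i >= 2, so the
      superpotential is u1_(1,2) + sum(a) + c + sum(b).
   4. Row 1 of u1 wP d = b_- w0 ubar2^-1 at columns 1 and n-1 yields d_11 and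
      u1_(1,2); since d is W_P-fixed, d_22^2 = 1, and u1_(1,2) is
      alpha_1(d) (a_1+b_1)/prod. *)

Ltac simpl_eqs := repeat match goal with
  | |- context [(?x == ?y)%N] =>
    first [ rewrite (_ : (x == y)%N = false); last (apply/negbTE/eqP; lia)
          | rewrite (_ : (x == y)%N = true); last (apply/eqP; lia) ] end.
Ltac vsimp := rewrite ?(mulr0n, mulr1n, scale0r, scale1r, scaler0, addr0, add0r,
  mulr0, mul0r, mulr1, mul1r).
Ltac ifs := repeat (first [ match goal with H : context [if _ then _ else _] |- _ => move: H end
                          | case: ifP => ? ]); intros; (try lia); try done.

Section BasisColumns.
Variables (F : fieldType) (m : nat).
Local Notation n := (m.*2).
Local Notation M := 'M[F]_n.

Definition ecol (j : nat) : 'cV[F]_n := \col_r ((r.+1 == j)%:R).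
Definition colent (v : 'cV[F]_n) (i : nat) : F := \sum_(r < n) (r.+1 == i)%:R * v r 0.

Lemma ent_ord (A : M) (r s : 'I_n) : ent A r s = A r s.
Proof.
rewrite /ent (insubT (fun k => k < n)%N (ltn_ord r)).
rewrite (insubT (fun k => k < n)%N (ltn_ord s)).
by congr (A _ _); apply: val_inj.
Qed.

Lemma ent1_ord (A : M) (r s : 'I_n) : ent1 A r.+1 s.+1 = A r s.
Proof. by rewrite /ent1 /= ent_ord. Qed.

Lemma ord_of_index i : (1 <= i <= n)%N -> exists r : 'I_n, i = r.+1.
Proof.
move=> Hi; have Hr : (i.-1 < n)%N by lia.
by exists (Ordinal Hr) => /=; lia.
Qed.

Lemma colent_ord (v : 'cV[F]_n) (r : 'I_n) : colent v r.+1 = v r 0.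
Proof.
rewrite /colent (bigD1 r) //= eqxx mul1r big1 ?addr0 // => k Hk.
by rewrite eqSS (negbTE (Hk : (k:nat) != r)) mul0r.
Qed.

Lemma colentD u v i : colent (u + v) i = colent u i + colent v i.
Proof. by rewrite /colent -big_split; apply: eq_bigr => k _; rewrite mxE mulrDr. Qed.

Lemma colentZ (x : F) v i : colent (x *: v) i = x * colent v i.
Proof. by rewrite /colent mulr_sumr; apply: eq_bigr => k _; rewrite mxE mulrCA. Qed.

Lemma colent_ecol i k : (1 <= i <= n)%N -> colent (ecol k) i = (i == k)%:R.
Proof. by move=> /ord_of_index [r ->]; rewrite colent_ord mxE. Qed.

Lemma mul_ecol_ord (A : M) (r s : 'I_n) : (A *m ecol s.+1) r 0 = A r s.
Proof.
rewrite mxE (bigD1 s) //= mxE eqxx mulr1 big1 ?addr0 // => k Hk.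
by rewrite mxE eqSS (negbTE (Hk : (k:nat) != s)) mulr0.
Qed.

Lemma ent1_col (A : M) i j : (1 <= i <= n)%N -> (1 <= j <= n)%N ->
  ent1 A i j = colent (A *m ecol j) i.
Proof.
move=> /ord_of_index [r ->] /ord_of_index [s ->].
by rewrite ent1_ord colent_ord mul_ecol_ord.
Qed.

Lemma mx_ecolP (A B : M) :
  (forall j, (1 <= j <= n)%N -> A *m ecol j = B *m ecol j) -> A = B.
Proof.
move=> H; apply/matrixP => r s.
have /(congr1 (fun v : 'cV_n => v r 0)) := H s.+1 (ltn_ord s).
by rewrite !mul_ecol_ord.
Qed.

Lemma Emx_ecol p q j : (1 <= j <= n)%N ->
  Emx F m p q *m ecol j = (q == j)%:R *: ecol p.
Proof.
move=> /ord_of_index [s ->]; apply/colP => r.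
rewrite mul_ecol_ord !mxE.
by case: (r.+1 == p); case: (s.+1 == q) (eq_sym q s.+1) => -> ; rewrite ?mulr1 ?mulr0.
Qed.

Lemma Emx_tr p q : (Emx F m p q)^T = Emx F m q p.
Proof. by apply/matrixP => r s; rewrite !mxE andbC. Qed.

Lemma ent1D (A B : M) i j : (1 <= i <= n)%N -> (1 <= j <= n)%N ->
  ent1 (A + B) i j = ent1 A i j + ent1 B i j.
Proof. by move=> /ord_of_index [r ->] /ord_of_index [s ->]; rewrite !ent1_ord mxE. Qed.

Lemma ent1Z (x : F) (A : M) i j : (1 <= i <= n)%N -> (1 <= j <= n)%N ->
  ent1 (x *: A) i j = x * ent1 A i j.
Proof. by move=> /ord_of_index [r ->] /ord_of_index [s ->]; rewrite !ent1_ord mxE. Qed.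

Lemma ent1N (A : M) i j : (1 <= i <= n)%N -> (1 <= j <= n)%N ->
  ent1 (- A) i j = - ent1 A i j.
Proof. by move=> /ord_of_index [r ->] /ord_of_index [s ->]; rewrite !ent1_ord mxE. Qed.

Lemma ent1_1 i j : (1 <= i <= n)%N -> (1 <= j <= n)%N ->
  ent1 (1%:M : M) i j = (i == j)%:R.
Proof. by move=> /ord_of_index [r ->] /ord_of_index [s ->]; rewrite !ent1_ord mxE eqSS. Qed.

Lemma ent1_mul_row (A B : M) i j p :
  (1 <= i <= n)%N -> (1 <= j <= n)%N -> (1 <= p <= n)%N ->
  (forall k, (1 <= k <= n)%N -> k != p -> ent1 A i k = 0) ->
  ent1 (A *m B) i j = ent1 A i p * ent1 B p j.
Proof.
move=> /ord_of_index [r ->] /ord_of_index [s ->] /ord_of_index [q ->] H.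
rewrite !ent1_ord mxE (bigD1 q) //= big1 ?addr0 // => k Hk.
have := H k.+1 (ltn_ord k); rewrite ent1_ord => ->; [by rewrite mul0r | by rewrite eqSS].
Qed.

Lemma ent1_mul_col (A B : M) i j p (x : F) :
  (1 <= i <= n)%N -> (1 <= j <= n)%N -> (1 <= p <= n)%N ->
  B *m ecol j = x *: ecol p -> ent1 (A *m B) i j = x * ent1 A i p.
Proof.
move=> Hi Hj Hp H; rewrite ent1_col // -mulmxA H -scalemxAr colentZ -ent1_col //.
Qed.

Lemma ent1_monomial (B : M) i j p (x : F) : (1 <= i <= n)%N -> (1 <= j <= n)%N ->
  B *m ecol j = x *: ecol p -> ent1 B i j = x * (i == p)%:R.
Proof. by move=> Hi Hj H; rewrite ent1_col // H colentZ colent_ecol. Qed.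

Lemma ent1_upper (A : M) i j : upper_tri A -> (1 <= j)%N -> (j < i)%N -> (i <= n)%N ->
  ent1 A i j = 0.
Proof.
move=> HA Hj Hji Hin.
have [r Er] := @ord_of_index i ltac:(lia); have [s Es] := @ord_of_index j ltac:(lia).
rewrite Er Es ent1_ord; apply/eqP.
by move: HA => /forallP /(_ r) /forallP /(_ s) /implyP; apply; lia.
Qed.

Lemma ent1_lower (A : M) i j : lower_tri A -> (1 <= i)%N -> (i < j)%N -> (j <= n)%N ->
  ent1 A i j = 0.
Proof.
move=> HA Hi Hij Hjn.
have [r Er] := @ord_of_index i ltac:(lia); have [s Es] := @ord_of_index j ltac:(lia).
rewrite Er Es ent1_ord; apply/eqP.
by move: HA => /forallP /(_ r) /forallP /(_ s) /implyP; apply; lia.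
Qed.

Lemma ent1_unitri (A : M) i : unitri_diag A -> (1 <= i <= n)%N -> ent1 A i i = 1.
Proof.
move=> HA Hi; have [r ->] := @ord_of_index i Hi.
by rewrite ent1_ord; apply/eqP; move: HA => /forallP.
Qed.

End BasisColumns.

Section Generators.
Variables (F : fieldType) (m : nat).
Local Notation n := (m.*2).
Local Notation M := 'M[F]_n.

Lemma e_act i j : (1 <= j <= n)%N -> e_gen F m i *m ecol F m j =
  if (i < m)%N then (i.+1 == j)%:R *: ecol F m i + ((n - i)%N.+1 == j)%:R *: ecol F m (n - i)
  else (m.+1 == j)%:R *: ecol F m m.
Proof.
move=> Hj; rewrite /e_gen; case: ifP => _; last by rewrite Emx_ecol.
by rewrite mulmxDl !Emx_ecol.
Qed.

Lemma f_act i j : (1 <= j <= n)%N -> f_gen F m i *m ecol F m j =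
  if (i < m)%N then (i == j)%:R *: ecol F m i.+1 + ((n - i)%N == j)%:R *: ecol F m (n - i).+1
  else (m == j)%:R *: ecol F m m.+1.
Proof.
move=> Hj; rewrite /f_gen /e_gen; case: ifP => _; last by rewrite Emx_tr Emx_ecol.
by rewrite linearD /= !Emx_tr mulmxDl !Emx_ecol.
Qed.

(* e_i and f_i square to zero, which makes their exponentials affine. *)
Lemma f_gen_sq0 i : (1 <= i <= m)%N -> f_gen F m i *m f_gen F m i = 0.
Proof.
move=> Hi; apply: mx_ecolP => j Hj; rewrite mul0mx -mulmxA f_act //.
case: ifP => Him.
  rewrite mulmxDr -!scalemxAr !f_act; try lia; rewrite Him.
  by simpl_eqs; vsimp.
rewrite -!scalemxAr !f_act; try lia; rewrite Him.
by simpl_eqs; vsimp.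
Qed.

Lemma e_gen_sq0 i : (1 <= i <= m)%N -> e_gen F m i *m e_gen F m i = 0.
Proof.
move=> Hi; apply: mx_ecolP => j Hj; rewrite mul0mx -mulmxA e_act //.
case: ifP => Him.
  rewrite mulmxDr -!scalemxAr !e_act; try lia; rewrite Him.
  by simpl_eqs; vsimp.
rewrite -!scalemxAr !e_act; try lia; rewrite Him.
by simpl_eqs; vsimp.
Qed.

Lemma mxpow_sq0 (N : M) k : N *m N = 0 -> (2 <= k)%N -> mxpow k N = 0.
Proof.
move=> HN; elim: k => [//|k IH] Hk.
have [->|Hk2] := eqVneq k 1%N; first by rewrite /mxpow /= mulmx1.
by rewrite /mxpow iterS -/(mxpow k N) IH ?mulmx0 //; lia.
Qed.

Lemma mexp_sq0 (N : M) : N *m N = 0 -> (1 <= m)%N -> mexp N = 1%:M + N.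
Proof.
move=> HN Hm; rewrite /mexp -(big_mkord xpredT (fun k => (k`!%:R)^-1 *: mxpow k N)).
rewrite big_ltn; last lia. rewrite big_ltn; last lia.
rewrite big1_seq ?addr0; last first.
  by move=> k /andP [_]; rewrite mem_index_iota => /andP [Hk _]; rewrite mxpow_sq0 ?scaler0.
by rewrite /= invr1 !scale1r /mxpow /= mulmx1.
Qed.

Lemma y_genE i x : (1 <= i <= m)%N -> y_gen m i x = 1%:M + x *: f_gen F m i.
Proof.
move=> Hi; rewrite /y_gen mexp_sq0 //; last lia.
by rewrite -scalemxAl -scalemxAr f_gen_sq0 // !scaler0.
Qed.

Lemma x_genE i x : (1 <= i <= m)%N -> x_gen m i x = 1%:M + x *: e_gen F m i.
Proof.
move=> Hi; rewrite /x_gen mexp_sq0 //; last lia.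
by rewrite -scalemxAl -scalemxAr e_gen_sq0 // !scaler0.
Qed.

Lemma y_inv i (x : F) : (1 <= i <= m)%N -> y_gen m i x *m y_gen m i (- x) = 1%:M.
Proof.
move=> Hi; rewrite !y_genE // mulmxDl mul1mx mulmxDr mulmx1 -scalemxAl -scalemxAr.
by rewrite f_gen_sq0 // !scaler0 addr0 scaleNr addrNK.
Qed.

Lemma x_inv i (x : F) : (1 <= i <= m)%N -> x_gen m i x *m x_gen m i (- x) = 1%:M.
Proof.
move=> Hi; rewrite !x_genE // mulmxDl mul1mx mulmxDr mulmx1 -scalemxAl -scalemxAr.
by rewrite e_gen_sq0 // !scaler0 addr0 scaleNr addrNK.
Qed.

Lemma f_gen_sub i s : (1 <= i <= m)%N -> (1 <= s)%N -> (s.+1 <= n)%N ->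
  ent1 (f_gen F m i) s.+1 s = ((s == i) || ((i < m)%N && (s == (n - i)%N)))%:R.
Proof.
move=> Hi Hs Hsn; rewrite ent1_col ?f_act; try lia.
case: ifP => Him; rewrite ?colentD !colentZ !colent_ecol; try lia.
  rewrite !eqSS [(i == s)]eq_sym [((n - i)%N == s)]eq_sym.
  by case: (s =P i) => ?; case: (s =P (n - i)%N) => ?; rewrite /=; vsimp => //; lia.
rewrite ?eqSS; case: (m =P s) => ?; case: (s =P i) => ?; case: (s =P m) => ?;
  by rewrite /=; vsimp => //; lia.
Qed.

Lemma f_gen_off i r s : (1 <= i <= m)%N -> (1 <= r <= n)%N -> (1 <= s <= n)%N ->
  r != s.+1 -> ent1 (f_gen F m i) r s = 0.
Proof.
move=> Hi Hr Hs Hrs; rewrite ent1_col ?f_act //.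
case: ifP => Him; rewrite ?colentD !colentZ !colent_ecol; try lia.
  by case: (i =P s) => ?; case: (r =P i.+1) => ?; case: ((n - i)%N =P s) => ?;
     case: (r =P (n - i).+1) => ?; vsimp; try lia.
by case: (m =P s) => ?; case: (r =P m.+1) => ?; vsimp; try lia.
Qed.

End Generators.

Section SimpleReflections.
Variables (F : fieldType) (m : nat).
Local Notation n := (m.*2).
Local Notation M := 'M[F]_n.
Local Notation ecol := (ecol F m).

Lemma mul1N (N : M) (x : F) (u : 'cV[F]_n) : (1%:M + x *: N) *m u = u + x *: (N *m u).
Proof. by rewrite mulmxDl mul1mx -scalemxAl. Qed.

Lemma sl2_reflection (e f : M) (v w : 'cV[F]_n) :
  f *m v = w -> f *m w = 0 -> e *m v = 0 -> e *m w = v ->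
  ((1%:M + (-1) *: f) *m (1%:M + 1 *: e) *m (1%:M + (-1) *: f)) *m v = - w /\
  ((1%:M + (-1) *: f) *m (1%:M + 1 *: e) *m (1%:M + (-1) *: f)) *m w = v.
Proof.
move=> fv fw ev ew; rewrite -!mulmxA !mul1N fv fw scaler0 addr0 scale1r scaleN1r.
rewrite !mulmxBr ev ew scale1r sub0r.
have E : v - w - v = - w by rewrite addrAC subrr add0r.
rewrite E mulmxN fw oppr0 scaler0 addr0 mulmxDr fw fv add0r scaleN1r.
by split=> //; rewrite addrC addKr.
Qed.

Lemma sl2_fixed (e f : M) (u : 'cV[F]_n) :
  f *m u = 0 -> e *m u = 0 ->
  ((1%:M + (-1) *: f) *m (1%:M + 1 *: e) *m (1%:M + (-1) *: f)) *m u = u.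
Proof.
by move=> fu eu; rewrite -!mulmxA !mul1N fu scaler0 addr0 eu scaler0 addr0 fu scaler0 addr0.
Qed.

(* s_i-dot is a signed permutation of the basis: e_j |-> s_sign i j e_(s_perm i j). *)
Definition s_perm (i j : nat) : nat :=
  if (i < m)%N then
    (if j == i then i.+1 else if j == i.+1 then i else
     if j == (n - i)%N then (n - i).+1 else if j == (n - i).+1 then (n - i)%N else j)
  else (if j == m then m.+1 else if j == m.+1 then m else j).
Definition s_sign (i j : nat) : F :=
  if (i < m)%N then (if (j == i) || (j == (n - i)%N) then -1 else 1)
  else (if j == m then -1 else 1).

Ltac basis_act Him := rewrite ?f_act ?e_act; (try lia); rewrite ?Him; simpl_eqs; vsimp.
Ltac close_sign := simpl_eqs; rewrite /= ?scaleN1r ?scale1r.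

Lemma sdot_act i j : (1 <= i <= m)%N -> (1 <= j <= n)%N ->
  sdot F m i *m ecol j = s_sign i j *: ecol (s_perm i j).
Proof.
move=> Hi Hj; rewrite /sdot !y_genE ?x_genE // /s_sign /s_perm.
set R := (1%:M + (-1) *: f_gen F m i) *m (1%:M + 1 *: e_gen F m i)
  *m (1%:M + (-1) *: f_gen F m i).
have fixed : f_gen F m i *m ecol j = 0 -> e_gen F m i *m ecol j = 0 -> R *m ecol j = ecol j.
  exact: sl2_fixed.
case: ifP => Him.
  have sl2 p : p = i \/ p = (n - i)%N -> R *m ecol p = - ecol p.+1 /\ R *m ecol p.+1 = ecol p.
    by case=> ->; apply: sl2_reflection; basis_act Him.
  have [->|?] := eqVneq j i; first by rewrite (sl2 i (or_introl erefl)).1; close_sign.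
  have [->|?] := eqVneq j i.+1; first by rewrite (sl2 i (or_introl erefl)).2; close_sign.
  have [->|?] := eqVneq j (n - i)%N; first by rewrite (sl2 _ (or_intror erefl)).1; close_sign.
  have [->|?] := eqVneq j (n - i).+1; first by rewrite (sl2 _ (or_intror erefl)).2; close_sign.
  by rewrite fixed; [close_sign | basis_act Him | basis_act Him].
have sl2 : R *m ecol m = - ecol m.+1 /\ R *m ecol m.+1 = ecol m.
  by apply: sl2_reflection; basis_act Him.
have [->|?] := eqVneq j m; first by rewrite sl2.1; close_sign.
have [->|?] := eqVneq j m.+1; first by rewrite sl2.2; close_sign.
by rewrite fixed; [close_sign | basis_act Him | basis_act Him].
Qed.

Lemma sdot_unit i : (1 <= i <= m)%N -> sdot F m i \in unitmx.
Proof.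
move=> Hi; rewrite /sdot !unitmx_mul.
have [Hy _] := mulmx1_unit (@y_inv F m i (-1) Hi).
have [Hx _] := mulmx1_unit (@x_inv F m i 1 Hi).
by rewrite Hy Hx.
Qed.

End SimpleReflections.

Section CoxeterWords.
Variables (F : fieldType) (m : nat).
Local Notation n := (m.*2).
Local Notation M := 'M[F]_n.
Local Notation ecol := (ecol F m).

Lemma wdot_cons i w : wdot F m (i :: w) = sdot F m i *m wdot F m w.
Proof. by []. Qed.

Lemma wdot_cat w1 w2 : wdot F m (w1 ++ w2) = wdot F m w1 *m wdot F m w2.
Proof. by elim: w1 => [|i w1 IH] /=; [rewrite mul1mx | rewrite IH mulmxA]. Qed.

Lemma wdot_unit w : all (fun i => (1 <= i <= m)%N) w -> wdot F m w \in unitmx.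
Proof.
elim: w => [|i w IH] /=; first by rewrite unitmx1.
by move=> /andP [Hi Hw]; rewrite unitmx_mul sdot_unit // IH.
Qed.

(* The partial Coxeter word s_t s_(t+1) ... s_m acts on the basis as the
   signed permutation e_j |-> cox_sign t j e_(cox_perm t j): it shifts
   t..m-1 up by one, sends m to n+1-t and m+1 to t, shifts m+2..n+1-t down
   by one and fixes the remaining indices. *)
Definition cox_perm (t j : nat) : nat :=
  if (j < t)%N then j else if (j < m)%N then j.+1 else if j == m then (n.+1 - t)%N
  else if j == m.+1 then t else if (j <= n.+1 - t)%N then j.-1 else j.
Definition cox_sign (t j : nat) : F :=
  if (j < t)%N then 1 else if (j < m)%N then -1
  else if j == m then (-1) ^+ (m - t).+1 else 1.

Lemma cox_perm_range t j : (1 <= t <= m)%N -> (1 <= j <= n)%N -> (1 <= cox_perm t j <= n)%N.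
Proof. by move=> Ht Hj; rewrite /cox_perm; ifs. Qed.

Lemma cox_sign_neq0 t j : cox_sign t j != 0.
Proof.
rewrite /cox_sign; ifs; rewrite ?oppr_eq0 ?oner_eq0 //.
by rewrite expf_neq0 // oppr_eq0 oner_eq0.
Qed.

Lemma cox_act t j : (1 <= t <= m)%N -> (1 <= j <= n)%N ->
  wdot F m (iota t (m - t).+1) *m ecol j = cox_sign t j *: ecol (cox_perm t j).
Proof.
move=> Ht Hj; remember (m - t)%N as k eqn:Ek.
elim: k t Ht Ek j Hj => [|k IH] t Ht Ek j Hj.
  have -> : t = m by lia.
  rewrite /= mulmx1 sdot_act //; last lia.
  by congr (_ *: ecol _); rewrite /s_sign /s_perm /cox_sign /cox_perm; ifs; rewrite subnn expr1.
rewrite -[iota _ _]/(t :: iota t.+1 k.+1) wdot_cons -mulmxA IH; try lia.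
rewrite -scalemxAr sdot_act; last (apply: cox_perm_range; lia); last lia.
rewrite scalerA; congr (_ *: ecol _); last by rewrite /s_perm /cox_perm; ifs.
have E : (m - t = (m - t.+1).+1)%N by lia.
rewrite /s_sign /s_perm /cox_sign /cox_perm E; ifs; rewrite ?mulr1 ?mul1r ?mulrN1 ?opprK //.
by rewrite [in RHS]exprS mulN1r.
Qed.

Fixpoint iter_sign (sigma : nat -> F) (g : nat -> nat) (k j : nat) : F :=
  if k is k'.+1 then sigma (iter k' g j) * iter_sign sigma g k' j else 1.

Lemma iter_sign_neq0 (sigma : nat -> F) g k j :
  (forall x, sigma x != 0) -> iter_sign sigma g k j != 0.
Proof. by move=> H; elim: k => [|k IH] /=; [exact: oner_neq0 | rewrite mulf_neq0]. Qed.

Lemma iter_range (g : nat -> nat) k j :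
  (forall j, (1 <= j <= n)%N -> (1 <= g j <= n)%N) -> (1 <= j <= n)%N ->
  (1 <= iter k g j <= n)%N.
Proof. by move=> Hg Hj; elim: k => [//|k IH]; rewrite iterS; exact: Hg. Qed.

Lemma wdot_power_act w (sigma : nat -> F) (g : nat -> nat) k j :
  (forall j, (1 <= j <= n)%N -> wdot F m w *m ecol j = sigma j *: ecol (g j)) ->
  (forall j, (1 <= j <= n)%N -> (1 <= g j <= n)%N) -> (1 <= j <= n)%N ->
  wdot F m (flatten (nseq k w)) *m ecol j = iter_sign sigma g k j *: ecol (iter k g j).
Proof.
move=> Hw Hg Hj; elim: k => [|k IH]; first by rewrite /= mul1mx scale1r.
rewrite [flatten _]/= wdot_cat -mulmxA IH -scalemxAr Hw; last exact: iter_range.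
by rewrite scalerA mulrC iterS.
Qed.

Lemma cox_perm_iter_up t k j : (t <= j)%N -> (j + k <= m)%N ->
  iter k (cox_perm t) j = (j + k)%N.
Proof.
move=> H1; elim: k => [|k IH] H2; first by rewrite addn0.
by rewrite iterS IH; [rewrite /cox_perm; ifs | lia].
Qed.

Lemma cox_perm_iter_down t k j : (m.+1 + k <= j)%N -> (j <= n.+1 - t)%N ->
  iter k (cox_perm t) j = (j - k)%N.
Proof.
move=> H1 H2; elim: k H1 => [|k IH] H1; first by rewrite subn0.
by rewrite iterS IH; [rewrite /cox_perm; ifs | lia].
Qed.

Lemma cox_perm_iter_low t k j : (j < t)%N -> iter k (cox_perm t) j = j.
Proof. by move=> H; elim: k => [//|k IH]; rewrite iterS IH /cox_perm; ifs. Qed.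

Lemma cox_perm_iter_high t k j : (1 <= t)%N -> (n.+1 - t < j)%N ->
  iter k (cox_perm t) j = j.
Proof. by move=> H0 H; elim: k => [//|k IH]; rewrite iterS IH /cox_perm; ifs. Qed.

Lemma cox_perm_iter_full t j : (1 <= t <= m)%N -> (t <= j <= n.+1 - t)%N ->
  iter (m - t).+1 (cox_perm t) j = (n.+1 - j)%N.
Proof.
move=> Ht Hj; case: (leqP j m) => Hjm.
  have -> : (m - t).+1 = ((j - t) + (1 + (m - j)))%N by lia.
  rewrite !iterD (@cox_perm_iter_up t (m - j) j); try lia.
  have -> : (j + (m - j))%N = m by lia.
  by rewrite /= {2}/cox_perm; ifs; rewrite cox_perm_iter_down; lia.
have -> : (m - t).+1 = ((m - t).+1 - (j - m) + (1 + (j - m.+1)))%N by lia.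
rewrite !iterD (@cox_perm_iter_down t (j - m.+1) j); try lia.
have -> : (j - (j - m.+1))%N = m.+1 by lia.
by rewrite /= {2}/cox_perm; ifs; rewrite cox_perm_iter_up; lia.
Qed.

End CoxeterWords.

Section LongestElements.
Variables (F : fieldType) (m : nat).
Hypothesis hm : (2 <= m)%N.
Local Notation n := (m.*2).
Local Notation ecol := (ecol F m).

Definition wP_perm j := iter m.-1 (cox_perm m 2) j.
Definition wP_sign j := iter_sign (cox_sign F m 2) (cox_perm m 2) m.-1 j.
Definition w0_perm j := iter m (cox_perm m 1) j.
Definition w0_sign j := iter_sign (cox_sign F m 1) (cox_perm m 1) m j.

Lemma wP_act j : (1 <= j <= n)%N -> wPdot F m *m ecol j = wP_sign j *: ecol (wP_perm j).
Proof.
move=> Hj; rewrite /wPdot /wP_word.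
have -> : iota 2 m.-1 = iota 2 (m - 2).+1 by congr iota; lia.
apply: wdot_power_act => // x Hx; first (apply: cox_act; lia).
apply: cox_perm_range; lia.
Qed.

Lemma w0_act j : (1 <= j <= n)%N -> w0dot F m *m ecol j = w0_sign j *: ecol (w0_perm j).
Proof.
move=> Hj; rewrite /w0dot /w0_word.
have -> : iota 1 m = iota 1 (m - 1).+1 by congr iota; lia.
apply: wdot_power_act => // x Hx; first (apply: cox_act; lia).
apply: cox_perm_range; lia.
Qed.

Lemma wP_unit : wPdot F m \in unitmx.
Proof.
apply: wdot_unit; apply/allP => i; rewrite /wP_word => /flattenP [s /nseqP [-> _]].
by rewrite mem_iota; lia.
Qed.

Lemma wP_perm_mid j : (2 <= j <= n.-1)%N -> wP_perm j = (n.+1 - j)%N.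
Proof.
move=> Hj; have H := @cox_perm_iter_full m 2 j ltac:(lia) ltac:(lia).
by rewrite (_ : (m - 2).+1 = m.-1) in H; [exact H | lia].
Qed.

Lemma wP_perm_1 : wP_perm 1 = 1%N.
Proof. by rewrite /wP_perm cox_perm_iter_low. Qed.

Lemma wP_perm_n : wP_perm n = n.
Proof. by rewrite /wP_perm cox_perm_iter_high //; lia. Qed.

Lemma wP_perm_range j : (1 <= j <= n)%N -> (1 <= wP_perm j <= n)%N.
Proof. by move=> Hj; apply: iter_range => // x Hx; apply: cox_perm_range; lia. Qed.

Lemma w0_perm_rev j : (1 <= j <= n)%N -> w0_perm j = (n.+1 - j)%N.
Proof.
move=> Hj; have H := @cox_perm_iter_full m 1 j ltac:(lia) ltac:(lia).
by rewrite (_ : (m - 1).+1 = m) in H; [exact H | lia].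
Qed.

Lemma wP_sign_neq0 j : wP_sign j != 0.
Proof. by apply: iter_sign_neq0 => x; exact: cox_sign_neq0. Qed.

Lemma wP_sign_1 : wP_sign 1 = 1.
Proof.
rewrite /wP_sign; elim: m.-1 => [//|k IH] /=.
by rewrite IH cox_perm_iter_low // /cox_sign; ifs; rewrite mulr1.
Qed.

Lemma wP_sign_nm1 : wP_sign n.-1 = 1.
Proof.
rewrite /wP_sign; have : (m.-1 <= m.-1)%N by [].
elim: {1 3}m.-1 => [//|k IH] Hk /=; rewrite IH; last lia.
by rewrite cox_perm_iter_down; try lia; rewrite /cox_sign; ifs; rewrite mulr1.
Qed.

End LongestElements.

Section YProducts.
Variables (F : fieldType) (m : nat).
Local Notation n := (m.*2).
Local Notation M := 'M[F]_n.
Local Notation ecol := (ecol F m).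

(* A word l = [(i_1,t_1); ...] encodes y_(i_1)(t_1) y_(i_2)(t_2) ...;
   ystep p = t f_i is the nilpotent part of the factor y_i(t) = 1 + t f_i. *)
Definition ystep (p : nat * F) : M := p.2 *: f_gen F m p.1.
Definition yprod (l : seq (nat * F)) : M :=
  foldr (fun p A => y_gen m p.1 p.2 *m A) 1%:M l.
Definition valid_word (l : seq (nat * F)) := all (fun p : nat * F => (1 <= p.1 <= m)%N) l.
Fixpoint corner_prod (l : seq (nat * F)) (r : nat) : F :=
  if l is p :: l' then ent1 (ystep p) r r.-1 * corner_prod l' r.-1 else 1.

Lemma ystep_off p r s : (1 <= p.1 <= m)%N -> (1 <= r <= n)%N -> (1 <= s <= n)%N ->
  r != s.+1 -> ent1 (ystep p) r s = 0.
Proof. by move=> Hp Hr Hs Hrs; rewrite ent1Z // f_gen_off // mulr0. Qed.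

Lemma ystep_mul_ent p (P : M) r s :
  (1 <= p.1 <= m)%N -> (1 <= r <= n)%N -> (1 <= s <= n)%N ->
  ent1 ((1%:M + ystep p) *m P) r s =
  ent1 P r s + (if (1 < r)%N then ent1 (ystep p) r r.-1 * ent1 P r.-1 s else 0).
Proof.
move=> Hp Hr Hs; rewrite mulmxDl mul1mx ent1D //; congr (_ + _).
case: ifP => H1.
  rewrite (@ent1_mul_row _ _ _ _ _ _ r.-1) //; try lia.
  by move=> k Hk Hkr; apply: ystep_off => //; lia.
rewrite (@ent1_mul_row _ _ _ _ _ _ 1%N) //; try lia.
  by rewrite ystep_off ?mul0r //; lia.
by move=> k Hk Hkr; apply: ystep_off => //; lia.
Qed.

Ltac yprod_step := rewrite -/(yprod _) y_genE // -/(ystep _) ystep_mul_ent //.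

Lemma yprod_upper l r s : valid_word l -> (1 <= r <= n)%N -> (1 <= s <= n)%N ->
  (r < s)%N -> ent1 (yprod l) r s = 0.
Proof.
elim: l r => [|p l IH] r /=; first by move=> _ Hr Hs Hrs; rewrite ent1_1 //; simpl_eqs.
move=> /andP [Hp Hl] Hr Hs Hrs; yprod_step; rewrite IH // add0r.
by case: ifP => // H1; rewrite IH ?mulr0 //; lia.
Qed.

Lemma yprod_diag l s : valid_word l -> (1 <= s <= n)%N -> ent1 (yprod l) s s = 1.
Proof.
elim: l => [|p l IH] /=; first by move=> _ Hs; rewrite ent1_1 // eqxx.
move=> /andP [Hp Hl] Hs; yprod_step; rewrite IH //.
by case: ifP => H1; rewrite ?addr0 // yprod_upper ?mulr0 ?addr0 //; lia.
Qed.

Lemma yprod_band l r s : valid_word l -> (1 <= r <= n)%N -> (1 <= s <= n)%N ->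
  (s + size l < r)%N -> ent1 (yprod l) r s = 0.
Proof.
elim: l r => [|p l IH] r /=; first by move=> _ Hr Hs Hrs; rewrite ent1_1 //; simpl_eqs.
move=> /andP [Hp Hl] Hr Hs Hrs; yprod_step; rewrite IH //; last lia.
by rewrite add0r; case: ifP => H1 //; rewrite IH ?mulr0 //; lia.
Qed.

Lemma yprod_sub l s : valid_word l -> (1 <= s)%N -> (s.+1 <= n)%N ->
  ent1 (yprod l) s.+1 s = \sum_(p <- l) ent1 (ystep p) s.+1 s.
Proof.
elim: l => [|p l IH] /=.
  by move=> _ Hs Hsn; rewrite big_nil ent1_1; [simpl_eqs | lia | lia].
move=> /andP [Hp Hl] Hs Hsn; rewrite -/(yprod l) y_genE // -/(ystep p).
rewrite ystep_mul_ent; [|exact: Hp|lia|lia].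
rewrite big_cons IH //; case: ifP => H1; last lia.
by rewrite yprod_diag ?mulr1 ?[_ + ent1 _ _ _]addrC //; lia.
Qed.

Lemma yprod_corner l s : valid_word l -> (1 <= s)%N -> (s + size l <= n)%N ->
  ent1 (yprod l) (s + size l) s = corner_prod l (s + size l).
Proof.
elim: l => [|p l IH] /=.
  by move=> _ Hs Hsn; rewrite addn0 ent1_1 ?eqxx //; lia.
move=> /andP [Hp Hl] Hs Hsn; rewrite -/(yprod l) y_genE // -/(ystep p).
rewrite ystep_mul_ent; [|exact: Hp|lia|lia].
rewrite yprod_band ?add0r //; try lia.
case: ifP => H1; last lia.
have -> : (s + (size l).+1).-1 = (s + size l)%N by lia.
by rewrite IH //; lia.
Qed.

Lemma yprod_cat l1 l2 : yprod (l1 ++ l2) = yprod l1 *m yprod l2.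
Proof. by elim: l1 => [|p l IH] /=; [rewrite mul1mx | rewrite IH mulmxA]. Qed.

Lemma corner_prod_cat l1 l2 r :
  corner_prod (l1 ++ l2) r = corner_prod l1 r * corner_prod l2 (r - size l1)%N.
Proof.
elim: l1 r => [|p l IH] r /=; first by rewrite mul1r subn0.
by rewrite IH mulrA (_ : (r.-1 - size l = r - (size l).+1)%N) //; lia.
Qed.

Definition yinv_word (l : seq (nat * F)) := [seq (p.1, - p.2) | p <- rev l].

Lemma yprod_inv l : valid_word l -> yprod l *m yprod (yinv_word l) = 1%:M.
Proof.
elim: l => [|p l IH] /=; first by rewrite mul1mx.
move=> /andP [Hp Hl].
rewrite /yinv_word rev_cons map_rcons -cats1 yprod_cat -/(yinv_word l) /= mulmx1.
by rewrite -mulmxA (mulmxA (yprod l)) IH // mul1mx y_inv.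
Qed.

End YProducts.

Section Ubar2.
Variables (F : fieldType) (m : nat) (a b : nat -> F) (c : F).
Hypothesis hm : (2 <= m)%N.
Local Notation n := (m.*2).

Definition ubar2_word : seq (nat * F) :=
  [seq (i, a i) | i <- iota 1 m.-1] ++ (m, c) :: [seq (i, b i) | i <- rev (iota 1 m.-1)].

Lemma ubar2E : ubar2_of m a c b = yprod m ubar2_word.
Proof. by rewrite /yprod /ubar2_word foldr_cat /= !foldr_map. Qed.

Lemma ubar2_inv_word : yinv_word ubar2_word =
  [seq (i, - b i) | i <- iota 1 m.-1] ++ (m, - c) :: [seq (i, - a i) | i <- rev (iota 1 m.-1)].
Proof. by rewrite /yinv_word /ubar2_word rev_pivot map_cat /= -!map_rev revK -!map_comp. Qed.

Lemma valid_word_sym (s t : nat -> F) (x : F) :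
  valid_word m ([seq (i, s i) | i <- iota 1 m.-1] ++ (m, x) :: [seq (i, t i) | i <- rev (iota 1 m.-1)]).
Proof.
rewrite /valid_word all_cat /= !all_map; apply/and3P; split.
- by apply/allP => i; rewrite mem_iota /=; lia.
- by apply/andP; split => //; lia.
- by apply/allP => i; rewrite mem_rev mem_iota /=; lia.
Qed.

Lemma ubar2_valid : valid_word m ubar2_word.
Proof. exact: valid_word_sym. Qed.

Lemma ubar2_inv_valid : valid_word m (yinv_word ubar2_word).
Proof. by rewrite ubar2_inv_word; apply: valid_word_sym. Qed.

Lemma ystep_sub_top (p : nat * F) i : (1 <= p.1 <= m)%N -> (1 <= i <= m)%N ->
  ent1 (ystep m p) i.+1 i = p.2 * (i == p.1)%:R.
Proof.
move=> Hp Hi; rewrite /ystep ent1Z ?f_gen_sub //; try lia.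
congr (_ * _%:R); case: (i =P p.1) => [//|Hne] /=.
by rewrite (_ : (i == (n - p.1)%N) = false) ?andbF //; apply/eqP; lia.
Qed.

Lemma ystep_sub_bottom (p : nat * F) : (1 <= p.1 <= m)%N ->
  ent1 (ystep m p) n n.-1 = p.2 * (p.1 == 1)%N%:R.
Proof.
move=> Hp; rewrite /ystep ent1Z; try lia.
have -> : n = (n.-1).+1 by lia.
rewrite f_gen_sub //; try lia.
have -> : (n.-1 == p.1) || (p.1 < m)%N && (n.-1 == (n - p.1)%N) = (p.1 == 1)%N => //.
apply/idP/idP; first by move=> /orP [/eqP|/andP [_ /eqP]] => ?; apply/eqP; lia.
by move=> /eqP E; apply/orP; right; apply/andP; split; [lia | apply/eqP; lia].
Qed.

Lemma sum_indicator j : (1 <= j <= m)%N -> \sum_(1 <= i < m.+1) (i == j)%:R = 1 :> F.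
Proof.
move=> Hj; rewrite (eq_bigr (fun i => if i == j then 1 else 0)) => [|i _]; last by case: (i == j).
by rewrite -big_mkcond big_nat1_eq; case: ifP => //; lia.
Qed.

Lemma ubar2_subdiag_sum : \sum_(1 <= i < m.+1) ent1 (yprod m ubar2_word) i.+1 i =
  \sum_(1 <= i < m) a i + c + \sum_(1 <= i < m) b i.
Proof.
have valid p : p \in ubar2_word -> (1 <= p.1 <= m)%N by move: ubar2_valid => /allP /(_ p).
rewrite big_nat_cond (eq_bigr (fun i => \sum_(p <- ubar2_word) p.2 * (i == p.1)%:R)); last first.
  move=> i /andP [Hi _]; rewrite yprod_sub //; try exact: ubar2_valid; try lia.
  rewrite [LHS]big_seq_cond [RHS]big_seq_cond; apply: eq_bigr => p /andP [Hp _].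
  by apply: ystep_sub_top; [exact: valid | lia].
rewrite -big_nat_cond exchange_big /=.
rewrite (eq_big_seq (fun p : nat * F => p.2)); last first.
  by move=> p Hp; rewrite -mulr_sumr sum_indicator ?mulr1 //; exact: valid.
by rewrite /ubar2_word big_cat big_cons !big_map big_rev /= /index_iota subn1 addrA.
Qed.

Lemma sum_iota_at1 (g : nat -> F) : \sum_(i <- iota 1 m.-1) g i * (i == 1)%N%:R = g 1.
Proof.
have -> : iota 1 m.-1 = 1%N :: iota 2 (m.-2) by rewrite (_ : m.-1 = (m.-2).+1); [|lia].
rewrite big_cons eqxx mulr1 big1_seq ?addr0 // => i /andP [_]; rewrite mem_iota => Hi.
by rewrite (_ : (i == 1)%N = false) ?mulr0 //; apply/eqP; lia.
Qed.

Lemma ubar2_inv_sub : ent1 (yprod m (yinv_word ubar2_word)) n n.-1 = - (a 1%N + b 1%N).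
Proof.
have H := @yprod_sub F m (yinv_word ubar2_word) n.-1 ubar2_inv_valid ltac:(lia) ltac:(lia).
rewrite prednK in H; last lia.
rewrite H (eq_big_seq (fun p : nat * F => p.2 * (p.1 == 1)%N%:R)); last first.
  by move=> p Hp; rewrite ystep_sub_bottom //; move: ubar2_inv_valid => /allP /(_ p Hp).
rewrite ubar2_inv_word big_cat big_cons !big_map big_rev /= !sum_iota_at1.
by simpl_eqs; rewrite mulr0 add0r opprD addrC.
Qed.

(* The corner product of ubar2^-1: the b-part walks down the rows n, n-1, ...
   through the entries of f_k at (n+1-k, n-k), the a-part through f_L at (L+1, L). *)
Lemma corner_prod_b k L r : (1 <= k)%N -> (k + L <= m)%N -> r = (n.+1 - k)%N ->
  corner_prod m [seq (i, - b i) | i <- iota k L] r = \prod_(i <- iota k L) (- b i).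
Proof.
elim: L k r => [|L IH] k r Hk HkL Hr; first by rewrite big_nil.
rewrite /= big_cons IH; try lia; congr (_ * _).
rewrite /ystep ent1Z /=; try lia.
rewrite (_ : r = (n - k).+1); last lia.
rewrite f_gen_sub //; try lia.
have nk_neq_k : ((n - k)%N == k) = false by apply/eqP; lia.
have k_lt_m : (k < m)%N = true by lia.
by rewrite eqxx nk_neq_k k_lt_m /= mulr1.
Qed.

Lemma corner_prod_a L r : (L < m)%N -> r = L.+1 ->
  corner_prod m [seq (i, - a i) | i <- rev (iota 1 L)] r = \prod_(i <- iota 1 L) (- a i).
Proof.
elim: L r => [|L IH] r HL Hr; first by rewrite big_nil.
have E : iota 1 L.+1 = iota 1 L ++ [:: L.+1] by rewrite -{1}(addn1 L) iotaD add1n.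
rewrite E rev_cat /= big_cat big_seq1 Hr /= (IH L.+1); [|lia|lia].
rewrite mulrC; congr (_ * _).
rewrite /ystep ent1Z /=; [|lia|lia].
by rewrite f_gen_sub ?eqxx /= ?mulr1 //; lia.
Qed.

Lemma ubar2_inv_corner : ent1 (yprod m (yinv_word ubar2_word)) n 1 =
  - (\prod_(1 <= i < m) a i * c * \prod_(1 <= i < m) b i).
Proof.
have H := @yprod_corner F m (yinv_word ubar2_word) 1 ubar2_inv_valid ltac:(lia).
have Hs : size (yinv_word ubar2_word) = n.-1.
  by rewrite ubar2_inv_word size_cat /= !size_map size_rev size_iota; lia.
rewrite Hs (_ : (1 + n.-1)%N = n) in H; last lia.
rewrite H; last lia.
rewrite ubar2_inv_word corner_prod_cat.
have -> : size [seq (i, - b i) | i <- iota 1 m.-1] = m.-1 by rewrite size_map size_iota.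
rewrite (@corner_prod_b 1 m.-1 n); [|lia|lia|lia].
rewrite (_ : (n - m.-1)%N = m.+1); last lia.
rewrite [corner_prod _ (_ :: _) _]/= (@corner_prod_a m.-1 m); [|lia|lia].
rewrite /ystep ent1Z /=; [|lia|lia].
rewrite f_gen_sub; [| lia | lia | lia].
rewrite eqxx /= mulr1 /index_iota subn1 mulrCA.
have -> : \prod_(i <- iota 1 m.-1) (- b i) * \prod_(i <- iota 1 m.-1) (- a i) =
   \prod_(i <- iota 1 m.-1) b i * \prod_(i <- iota 1 m.-1) a i.
  by rewrite -!big_split /=; apply: eq_bigr => i _; rewrite mulrNN.
ring.
Qed.

End Ubar2.

Section Torus.
Variables (F : fieldType) (m : nat).
Local Notation n := (m.*2).
Local Notation M := 'M[F]_n.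
Local Notation ecol := (ecol F m).

Lemma torus_act (d : M) j : in_T d -> (1 <= j <= n)%N -> d *m ecol j = ent1 d j j *: ecol j.
Proof.
move=> Hd Hj; have [s ->] := ord_of_index Hj.
apply/colP => r; rewrite mul_ecol_ord !mxE ent1_ord eqSS.
case: (eqVneq r s) => [->|Hrs]; first by rewrite eqxx mulr1.
rewrite (negbTE (Hrs : (r : nat) != s)) mulr0.
by move: Hd => /andP [/forallP /(_ r) /forallP /(_ s) /implyP /(_ Hrs) /eqP -> _].
Qed.

Lemma torus_pair (d : M) k : in_T d -> (1 <= k <= n)%N ->
  ent1 d k k * ent1 d (n.+1 - k) (n.+1 - k) = 1.
Proof.
move=> Hd Hk; have [i Ei] := ord_of_index Hk.
move: Hd => /andP [_ /forallP /(_ i) /eqP H].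
rewrite Ei ent1_ord -H; congr (_ * _).
by rewrite /ent1 (_ : ((n.+1 - i.+1).-1 = n - i.+1)%N) //; lia.
Qed.

Lemma sdot_e_i i : (1 <= i <= m)%N -> sdot F m i *m ecol i = (-1) *: ecol i.+1.
Proof.
move=> Hi; rewrite sdot_act //; last lia.
by rewrite /s_sign /s_perm; case: (ltnP i m) => H; [|have -> : i = m by lia]; rewrite eqxx.
Qed.

Lemma sdot_e_1 i : (2 <= i <= m)%N -> sdot F m i *m ecol 1 = 1 *: ecol 1.
Proof.
move=> Hi; rewrite sdot_act //; try lia.
by rewrite /s_sign /s_perm; case: ifP => H; simpl_eqs.
Qed.

End Torus.

Section WPFixedTorus.
Variables (F : numFieldType) (m : nat).
Hypothesis hm : (2 <= m)%N.
Local Notation n := (m.*2).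
Local Notation M := 'M[F]_n.

(* If s_i d = +-d s_i for some 2 <= i <= m, then d_ii = d_(i+1)(i+1): the
   entries (i+1,i) of both sides give d_ii = +-d_(i+1)(i+1), and the entries
   (1,1) rule out the minus sign since d_11 != 0 and 2 != 0. *)
Lemma torus_fixed_step (d : M) i : in_TWP d -> (2 <= i <= m)%N ->
  ent1 d i i = ent1 d i.+1 i.+1.
Proof.
move=> /andP [HT Hall] Hi.
have Hi' : i \in iota 2 m.-1 by rewrite mem_iota; lia.
have Hir : (1 <= i <= n)%N by lia.
have Hi1r : (1 <= i.+1 <= n)%N by lia.
have H1r : (1 <= 1 <= n)%N by lia.
have left_sub : ent1 (sdot F m i *m d) i.+1 i = - ent1 d i i.
  rewrite (ent1_mul_col _ Hi1r Hir Hir (torus_act HT Hir)).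
  by rewrite (ent1_monomial Hi1r Hir (@sdot_e_i F m i ltac:(lia))) eqxx mulr1 mulrN1.
have right_sub : ent1 (d *m sdot F m i) i.+1 i = - ent1 d i.+1 i.+1.
  by rewrite (ent1_mul_col _ Hi1r Hir Hi1r (@sdot_e_i F m i ltac:(lia))) mulN1r.
have left_11 : ent1 (sdot F m i *m d) 1 1 = ent1 d 1 1.
  rewrite (ent1_mul_col _ H1r H1r H1r (torus_act HT H1r)).
  by rewrite (ent1_monomial H1r H1r (@sdot_e_1 F m i Hi)) eqxx !mulr1.
have right_11 : ent1 (d *m sdot F m i) 1 1 = ent1 d 1 1.
  by rewrite (ent1_mul_col _ H1r H1r H1r (@sdot_e_1 F m i Hi)) mul1r.
move: Hall => /allP /(_ i Hi') /orP [/eqP E|/eqP E].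
  by apply: oppr_inj; rewrite -left_sub -right_sub E.
have : ent1 d 1 1 = - ent1 d 1 1 by rewrite -{1}left_11 E ent1N // right_11.
move=> /eqP; rewrite -addr_eq0 -mulr2n mulrn_eq0 /= => /eqP d11_0.
by have := torus_pair HT H1r; rewrite d11_0 mul0r => /eqP; rewrite eq_sym oner_eq0.
Qed.

(* For d in T^(W_P): d_22 = ... = d_(m+1)(m+1), hence d_22^2 = 1. *)
Lemma torus_fixed_sq (d : M) : in_TWP d -> ent1 d 2 2 * ent1 d 2 2 = 1.
Proof.
move=> Hd; have HT : in_T d by case/andP: Hd.
have chain k : (2 <= k <= m.+1)%N -> ent1 d k k = ent1 d 2 2.
  elim: k => [|k IH] Hk; first lia.
  have [->//|Hk1] := eqVneq k 1%N.
  by rewrite -torus_fixed_step //; try lia; apply: IH; lia.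
have := @torus_pair F m d m HT ltac:(lia).
by rewrite (_ : (n.+1 - m = m.+1)%N); [rewrite !chain //; lia | lia].
Qed.

Lemma torus_pair2 (d : M) : in_T d -> ent1 d n.-1 n.-1 * ent1 d 2 2 = 1.
Proof.
move=> HT; have := @torus_pair F m d 2 HT ltac:(lia).
by rewrite (_ : (n.+1 - 2 = n.-1)%N) 1?mulrC //; lia.
Qed.

End WPFixedTorus.

Section FirstRow.
Variables (F : fieldType) (m : nat).
Hypothesis hm : (2 <= m)%N.
Local Notation n := (m.*2).
Local Notation M := 'M[F]_n.

Lemma wP_row_support i k : (2 <= i <= n.-1)%N -> (1 <= k <= n)%N -> k != (n.+1 - i)%N ->
  ent1 (wPdot F m) i k = 0.
Proof.
move=> Hi Hk Hki; rewrite (ent1_monomial _ Hk (wP_act F hm Hk)); last lia.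
rewrite (_ : (i == wP_perm m k) = false) ?mulr0 //; apply/negbTE/eqP => Heq.
case: (ltnP 1 k) => Hk1; last by move: Heq; rewrite (_ : k = 1%N) ?wP_perm_1; lia.
case: (ltnP k n) => Hkn; first by move: Heq; rewrite wP_perm_mid //; lia.
by move: Heq; rewrite (_ : k = n) ?wP_perm_n; lia.
Qed.

(* If wP^-1 u1 wP is upper triangular, then u1_(i,i+1) = 0 for 2 <= i <= m:
   compare the entries (i, n-i) of u1 wP and of wP (wP^-1 u1 wP). *)
Lemma u1_superdiag_zero (u1 : M) i :
  upper_tri (invmx (wPdot F m) *m u1 *m wPdot F m) -> (2 <= i <= m)%N ->
  ent1 u1 i i.+1 = 0.
Proof.
set C := invmx (wPdot F m) *m u1 *m wPdot F m => HC Hi.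
have Hir : (1 <= i <= n)%N by lia.
have Hjr : (1 <= n - i <= n)%N by lia.
have Hnr : (1 <= n.+1 - i <= n)%N by lia.
have conj : u1 *m wPdot F m = wPdot F m *m C by rewrite !mulmxA mulmxV ?mul1mx // wP_unit.
have := congr1 (fun A => ent1 A i (n - i)) conj => /=.
rewrite (ent1_mul_col u1 Hir Hjr _ (wP_act F hm Hjr)); last by rewrite wP_perm_mid; lia.
rewrite (wP_perm_mid hm); last lia.
rewrite (_ : (n.+1 - (n - i) = i.+1)%N); last lia.
rewrite (ent1_mul_row _ Hir Hjr Hnr); last by move=> k Hk; apply: wP_row_support; lia.
rewrite (ent1_upper HC) ?mulr0; [| lia | lia | lia].
by move/eqP; rewrite mulf_eq0 (negbTE (wP_sign_neq0 _ _ _)) /= => /eqP.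
Qed.

Lemma superpot_reduce (u1 : M) a b c :
  upper_tri (invmx (wPdot F m) *m u1 *m wPdot F m) ->
  superpot u1 (ubar2_of m a c b) =
    ent1 u1 1 2 + (\sum_(1 <= i < m) a i + c + \sum_(1 <= i < m) b i).
Proof.
move=> HC; rewrite /superpot ubar2E (ubar2_subdiag_sum _ _ _ hm).
rewrite big_ltn; last lia.
rewrite big1_seq ?addr0 // => i /andP [_]; rewrite mem_index_iota => Hi.
by apply: u1_superdiag_zero; lia.
Qed.

(* Comparing first rows of u1 wP d = b_- w0 V: column j of the left side is
   d_jj times a signed column of u1, while b_- lower triangular and w0
   reversing the basis make row 1 of the right side a multiple of row n of V. *)
Lemma first_row_identity (d u1 bm V : M) j : in_T d -> lower_tri bm ->
  u1 *m wPdot F m *m d = bm *m w0dot F m *m V -> (1 <= j <= n)%N ->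
  ent1 d j j * (wP_sign F m j * ent1 u1 1 (wP_perm m j)) =
    ent1 bm 1 1 * ent1 (w0dot F m) 1 n * ent1 V n j.
Proof.
move=> Hd Hbm Hz Hj.
have H1 : (1 <= 1 <= n)%N by lia.
have Hn : (1 <= n <= n)%N by lia.
have Hp := wP_perm_range hm Hj.
rewrite -(ent1_mul_col u1 H1 Hj Hp (wP_act F hm Hj)).
rewrite -(ent1_mul_col _ H1 Hj Hj (torus_act Hd Hj)) Hz -mulmxA.
rewrite (ent1_mul_row _ H1 Hj H1); last by move=> k Hk Hk1; apply: (ent1_lower Hbm); lia.
rewrite (ent1_mul_row _ H1 Hj Hn) ?mulrA // => k Hk Hkn.
rewrite (ent1_monomial H1 Hk (w0_act F hm Hk)) w0_perm_rev //.
by rewrite (_ : (1 == n.+1 - k)%N = false) ?mulr0 //; apply/eqP; lia.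
Qed.

End FirstRow.

Lemma first_row_algebra (K : fieldType) (L P x d1 d2 dn s : K) :
  P != 0 -> d2 * d2 = 1 -> dn * d2 = 1 ->
  d1 = L * - P -> dn * x = L * - s -> x = d1 / d2 * s / P.
Proof.
move=> HP d2sq dnd2 Ed1 Ex.
have d2_neq0 : d2 != 0 by apply: contra_eq_neq d2sq => ->; rewrite mul0r eq_sym oner_neq0.
have d2V : d2^-1 = d2 by apply: (mulfI d2_neq0); rewrite mulfV.
have -> : x = d2 * (L * - s) by rewrite -Ex mulrA (mulrC d2) dnd2 mul1r.
by rewrite Ed1 d2V; field.
Qed.

Section Formula.
Variables (F : numFieldType) (m : nat).
Hypothesis hm : (2 <= m)%N.
Local Notation n := (m.*2).
Local Notation M := 'M[F]_n.

Lemma param_prod_neq0 (a b : nat -> F) (c : F) :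
  (forall i, (1 <= i < m)%N -> a i != 0) -> (forall i, (1 <= i < m)%N -> b i != 0) ->
  c != 0 -> \prod_(1 <= i < m) a i * c * \prod_(1 <= i < m) b i != 0.
Proof.
have prod_neq0 (g : nat -> F) : (forall i, (1 <= i < m)%N -> g i != 0) ->
    \prod_(1 <= i < m) g i != 0.
  by move=> Hg; rewrite prodf_seq_neq0; apply/allP => i; rewrite mem_index_iota => /Hg.
by move=> Ha Hb Hc; rewrite !mulf_neq0 // prod_neq0.
Qed.

(* The key entry: u1_(1,2) = alpha_1(d) (a_1 + b_1) / (a_1 ... a_(m-1) c b_(m-1) ... b_1),
   read off from the first row of u1 wP d = b_- w0 ubar2^-1 at columns 1 and n-1. *)
Lemma u1_entry_12 (d u1 bm : M) (a b : nat -> F) (c : F) :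
  in_TWP d -> unitri_diag u1 -> lower_tri bm ->
  \prod_(1 <= i < m) a i * c * \prod_(1 <= i < m) b i != 0 ->
  u1 *m wPdot F m *m d *m ubar2_of m a c b = bm *m w0dot F m ->
  ent1 u1 1 2 = alpha1 d * (a 1%N + b 1%N)
                / (\prod_(1 <= i < m) a i * c * \prod_(1 <= i < m) b i).
Proof.
move=> Hd Hu1 Hbm HP Hz; have HT : in_T d by case/andP: Hd.
set V := yprod m (yinv_word (ubar2_word m a b c)).
have HzV : u1 *m wPdot F m *m d = bm *m w0dot F m *m V.
  by rewrite -Hz ubar2E -[_ *m V]mulmxA yprod_inv ?mulmx1 //; exact: ubar2_valid.
have E1 := first_row_identity hm (j := 1) HT Hbm HzV ltac:(lia).
rewrite wP_perm_1 (wP_sign_1 F hm) (ent1_unitri Hu1) ?(ubar2_inv_corner _ _ _ hm) in E1; last lia.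
have E2 := first_row_identity hm (j := n.-1) HT Hbm HzV ltac:(lia).
rewrite (wP_perm_mid hm) ?(wP_sign_nm1 F hm) ?(ubar2_inv_sub _ _ _ hm) in E2; last lia.
rewrite (_ : (n.+1 - n.-1 = 2)%N) in E2; last lia.
set L := ent1 bm 1 1 * ent1 (w0dot F m) 1 n.
apply: (first_row_algebra (L := L) HP (torus_fixed_sq hm Hd) (torus_pair2 hm HT)).
  by rewrite -E1 !mulr1.
by rewrite -E2 mul1r.
Qed.

End Formula.

Unset Implicit Arguments.

Theorem mainTheorem6 (F : numClosedFieldType) (m : nat) (hm : (2 <= m)%N)
    (d u1 : 'M[F]_(m.*2)) (a b : nat -> F) (c : F) :
  in_TWP d ->
  in_Uplus u1 ->
  in_Uplus (invmx (wPdot F m) *m u1 *m wPdot F m) ->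
  (forall i, (1 <= i < m)%N -> a i != 0) ->
  (forall i, (1 <= i < m)%N -> b i != 0) ->
  c != 0 ->
  (* z = u1 wP d ubar2 lies in B_- w0 *)
  (exists bm : 'M[F]_(m.*2), [/\ lower_tri bm, in_Sp bm &
      u1 *m wPdot F m *m d *m ubar2_of m a c b = bm *m w0dot F m]) ->
  superpot u1 (ubar2_of m a c b) =
    \sum_(1 <= i < m) a i + c + \sum_(1 <= i < m) b i
    + alpha1 d * (a 1%N + b 1%N)
        / ((\prod_(1 <= i < m) a i) * c * \prod_(1 <= i < m) b i).
Proof.
move=> Hd Hu1 Hconj Ha Hb Hc [bm [Hbm _ Hz]].
have [_ _ u1_unitri] := and3P Hu1.
have [_ conj_upper _] := and3P Hconj.
have HP := param_prod_neq0 Ha Hb Hc.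
rewrite (superpot_reduce hm a b c conj_upper) (u1_entry_12 hm Hd u1_unitri Hbm HP Hz).
by rewrite addrC.
Qed.
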